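(* Let $\varepsilon>0$ and let $\widetilde M_f,\widetilde M_g$ be as in the context. Let $\phi: L_f\to\widetilde M_g$ assign to each leaf $u\in L_f$ a node $\phi(u)$ of $\widetilde M_g$ with $\tilde g(\phi(u))=\tilde f(u)+\varepsilon$. For two distinct leaves $u_i,u_j\in L_f$, let $\phi_i: P_i\to P_i'$ and $\phi_j: P_j\to P_j'$ be the path extensions of $u_i\mapsto\phi(u_i)$ and $u_j\mapsto\phi(u_j)$, and let $v=\mathrm{LCA}(u_i,u_j)$ be the least common ancestor of $u_i$ and $u_j$ in $\widetilde M_f$. Then the map $\phi_i\cup\phi_j: P_i\cup P_j\to P_i'\cup P_j'$, given by $\phi_i$ on $P_i$ and $\phi_j$ on $P_j$, is well-defined if and only if $\phi_i(v)=\phi_j(v)$. Furthermore, under this condition $\phi_i\cup\phi_j$ is continuous.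
   Context: A finite merge tree is a finite rooted tree regarded as a topological space, with a continuous height function strictly increasing along each edge toward the root. Let $M_f$ (height $\tilde f$, root $r_f$) and $M_g$ (height $\tilde g$, root $r_g$) be finite merge trees with $\tilde g(r_g)=\tilde f(r_f)+\varepsilon$. Let $H=\{\tilde f(u): u \text{ a node of } M_f\}\cup\{\tilde g(w)-\varepsilon: w\text{ a node of } M_g\}$. The augmented tree $\widetilde M_f$ is obtained from $M_f$ by inserting a degree-two node at every point $x$ with $\tilde f(x)\in H$ that is not already a node; $\widetilde M_g$ is obtained from $M_g$ by inserting a degree-two node at every point $y$ with $\tilde g(y)\in H+\varepsilon$ not already a node. $L_f$ is the set of leaf nodes of $\widetilde M_f$. For a leaf $u_i$, $P_i$ is the path from $u_i$ to the root of $\widetilde M_f$ and $P_i'$ the path from $\phi(u_i)$ to the root of $\widetilde M_g$; the path extension $\phi_i: P_i\to P_i'$ maps each $x\in P_i$ to the unique point of $P_i'$ whose $\tilde g$-value is $\tilde f(x)+\varepsilon$. A point $a$ is an ancestor of $b$ if $a$ lies on the path from $b$ to the root; $\mathrm{LCA}(u_i,u_j)$ is the common ancestor of $u_i,u_j$ of smallest height. *)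

From HB Require Import structures.
From mathcomp Require Import all_boot all_order all_algebra.
From mathcomp Require Import reals.
From Stdlib Require Import ClassicalEpsilon.
Set Implicit Arguments. Unset Strict Implicit. Unset Printing Implicit Defensive.
Import Order.TTheory GRing.Theory Num.Theory.
Local Open Scope ring_scope.

Record mtree (R : realType) := MTree {
  mt_V : finType;
  mt_root : mt_V;
  mt_par : mt_V -> mt_V;
  mt_ht : mt_V -> R;
  mt_par_root : mt_par mt_root = mt_root;
  mt_reach : forall v, exists n, iter n mt_par v = mt_root;
  mt_incr : forall v, v != mt_root -> mt_ht v < mt_ht (mt_par v) }.
Arguments mt_V {R} m.
Arguments mt_root {R} m.
Arguments mt_par {R} m _.
Arguments mt_ht {R} m _.

Section Points.
Variable R : realType.
Variable T : mtree R.

(* A point of the topological tree: either the root, or a point on the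
   half-open edge [v, parent v), encoded by the node v below it and its height. *)
Definition valid_pt (v : mt_V T) (h : R) : bool :=
  if v == mt_root T then h == mt_ht T v
  else (mt_ht T v <= h) && (h < mt_ht T (mt_par T v)).

Record point := Pt { pt_v : mt_V T; pt_h : R; pt_ok : valid_pt pt_v pt_h }.

Lemma root_pt_ok : valid_pt (mt_root T) (mt_ht T (mt_root T)).
Proof. by rewrite /valid_pt eqxx. Qed.

Definition root_pt : point := Pt root_pt_ok.

Definition anc (a b : point) : Prop :=
  (exists n, pt_v a = iter n (mt_par T) (pt_v b)) /\ pt_h b <= pt_h a.

Definition is_node (x : point) : Prop := pt_h x = mt_ht T (pt_v x).

Definition is_lca (v a b : point) : Prop :=
  anc v a /\ anc v b /\ forall w, anc w a -> anc w b -> pt_h v <= pt_h w.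

(* Open ball of the path metric (edge length = height difference):
   d(x,y) < d  iff some common ancestor a has (h a - h x) + (h a - h y) < d. *)
Definition near (x y : point) (d : R) : Prop :=
  exists a, anc a x /\ anc a y /\ (pt_h a - pt_h x) + (pt_h a - pt_h y) < d.

End Points.

Arguments root_pt {R} T.

Section Merge.
Variable R : realType.
Variables (Tf Tg : mtree R) (eps : R).

Definition Hset (r : R) : Prop :=
  (exists v : mt_V Tf, r = mt_ht Tf v) \/ (exists w : mt_V Tg, r = mt_ht Tg w - eps).

Definition aug_node_f (x : point Tf) : Prop := is_node x \/ Hset (pt_h x).
Definition aug_node_g (y : point Tg) : Prop := is_node y \/ Hset (pt_h y - eps).

Definition aug_leaf_f (x : point Tf) : Prop :=
  aug_node_f x /\ forall y, anc x y -> y = x.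

(* Path extension of u |-> u' : x on the path from u maps to the (unique)
   point of the path from u' to the root of height h(x) + eps. *)
Definition pext (u' : point Tg) (x : point Tf) : point Tg :=
  epsilon (inhabits (root_pt Tg))
    (fun y => anc y u' /\ pt_h y = pt_h x + eps).

End Merge.
Arguments Hset {R} Tf Tg eps r.
Arguments aug_node_f {R} Tf Tg eps x.
Arguments aug_node_g {R} Tf Tg eps y.
Arguments aug_leaf_f {R} Tf Tg eps x.
Arguments pext {R Tf Tg} eps u' x.

Definition punion (A B : Type) (P : A -> Prop) (f g : A -> B) (x : A) : B :=
  if excluded_middle_informative (P x) then f x else g x.

Definition cont_on (R : realType) (Tf Tg : mtree R)
    (S : point Tf -> Prop) (F : point Tf -> point Tg) : Prop :=
  forall x, S x -> forall e : R, 0 < e -> exists d : R, 0 < d /\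
    forall y, S y -> near x y d -> near (F x) (F y) e.

(* Points of a merge tree on a common path to the root are totally ordered by
   height and determined by it, so the path extension of a leaf u |-> u' is
   the height-shift by eps along the path from u'.  Two such extensions that
   agree at the least common ancestor v of their leaves agree at every point
   above v, hence on all of P_i ∩ P_j, which makes the union well defined.
   The witness a of [near x y d] lies above both x and y, and shifting it by
   eps gives a common ancestor of the images with the same height excess,
   so the union is 1-Lipschitz for the path metrics, in particular
   continuous. *)

From HB Require Import structures.
From mathcomp Require Import all_boot all_order all_algebra.
From mathcomp Require Import reals.
From mathcomp Require Import ring.
From Stdlib Require Import ClassicalEpsilon.
Import Order.TTheory GRing.Theory Num.Theory.
Local Open Scope ring_scope.
Set Implicit Arguments. Unset Strict Implicit.

Section Tree.
Variables (R : realType) (T : mtree R).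
Notation par := (mt_par T).
Notation ht := (mt_ht T).
Notation rt := (mt_root T).

Lemma le_ht_par w : ht w <= ht (par w).
Proof.
have [->|w_nr] := eqVneq w rt; first by rewrite mt_par_root.
exact/ltW/mt_incr.
Qed.

Lemma le_ht_iter k w : ht w <= ht (iter k par w).
Proof. by elim: k => //= k IH; exact: le_trans IH (le_ht_par _). Qed.

Lemma iter_par_root k : iter k par rt = rt.
Proof. by elim: k => //= k ->; rewrite mt_par_root. Qed.

Lemma le_ht_root w : ht w <= ht rt.
Proof. by have [n <-] := mt_reach w; exact: le_ht_iter. Qed.

Lemma pt_valid (x : point T) :
  if pt_v x == rt then pt_h x = ht (pt_v x)
  else (ht (pt_v x) <= pt_h x) && (pt_h x < ht (par (pt_v x))).
Proof. by case: x => v h /=; rewrite /valid_pt; case: (v == rt) => //; move/eqP. Qed.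

Lemma le_ht_pt (x : point T) : ht (pt_v x) <= pt_h x.
Proof. by have := pt_valid x; case: (_ == _) => [->|/andP[]]. Qed.

Lemma le_pt_root (x : point T) : pt_h x <= ht rt.
Proof.
have := pt_valid x; case: eqP => [-> -> //|_ /andP[_ x_lt]].
exact/ltW/(lt_le_trans x_lt)/le_ht_root.
Qed.

Lemma iter_par_lt_pt_h (a b : point T) k :
  pt_v b = iter k par (pt_v a) -> pt_v a <> pt_v b -> pt_h a < pt_h b.
Proof.
case: k => [-> //|k] b_above a_neq_b.
have a_nr : pt_v a != rt.
  by apply/eqP => a_rt; apply: a_neq_b; rewrite b_above a_rt iter_par_root.
have := pt_valid a; rewrite (negbTE a_nr) => /andP[_ a_lt].
apply: (lt_le_trans a_lt); apply: le_trans (le_ht_pt b).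
by rewrite b_above iterSr; apply: le_ht_iter.
Qed.

Lemma point_eq (a b : point T) : pt_v a = pt_v b -> pt_h a = pt_h b -> a = b.
Proof.
case: a b => va ha oka [vb hb okb] /= eq_v eq_h; subst vb hb.
by rewrite (bool_irrelevance oka okb).
Qed.

Lemma anc_refl (a : point T) : anc a a.
Proof. by split=> //; exists 0%N. Qed.

Lemma anc_trans (a b c : point T) : anc a b -> anc b c -> anc a c.
Proof.
move=> [[n an] hab] [[m bm] hbc]; split; last exact: le_trans hbc hab.
by exists (n + m)%N; rewrite iterD -bm.
Qed.

Lemma anc_of_le (a b c : point T) :
  anc a c -> anc b c -> pt_h a <= pt_h b -> anc b a.
Proof.
move=> [[n an] _] [[m bm] _] hab; split=> //.
have [n_le_m|m_lt_n] := leqP n m.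
  by exists (m - n)%N; rewrite bm an -iterD subnK.
have [//|a_neq_b] := eqVneq (pt_v a) (pt_v b); first by exists 0%N.
have a_above : pt_v a = iter (n - m) par (pt_v b).
  by rewrite an bm -iterD subnK // ltnW.
have := iter_par_lt_pt_h a_above (nesym (elimN eqP a_neq_b)).
by rewrite ltNge hab.
Qed.

Lemma anc_ht_inj (a b c : point T) :
  anc a c -> anc b c -> pt_h a = pt_h b -> a = b.
Proof.
move=> ac bc hab; have [[k bk] _] : anc b a by apply: anc_of_le ac bc _; rewrite hab.
apply: point_eq => //; have [//|a_neq_b] := eqVneq (pt_v a) (pt_v b).
by have := iter_par_lt_pt_h bk (elimN eqP a_neq_b); rewrite hab ltxx.
Qed.

Lemma exists_anc_ht (c : point T) t :
  pt_h c <= t -> t <= ht rt -> exists y, anc y c /\ pt_h y = t.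
Proof.
have [n] := mt_reach (pt_v c).
elim: n c => [|n IH] c /= c_reach c_le t_le.
  have := pt_valid c; rewrite c_reach eqxx => c_ht.
  by exists c; split; [exact: anc_refl | apply/le_anti; rewrite c_le c_ht t_le].
have [c_rt|c_nr] := eqVneq (pt_v c) rt.
  have := pt_valid c; rewrite c_rt eqxx => c_ht.
  by exists c; split; [exact: anc_refl | apply/le_anti; rewrite c_le c_ht t_le].
have := pt_valid c; rewrite (negbTE c_nr) => /andP[c_ge c_lt].
have [t_lt|t_ge] := ltP t (ht (par (pt_v c))).
  have ok : valid_pt (pt_v c) t by rewrite /valid_pt (negbTE c_nr) t_lt (le_trans c_ge c_le).
  by exists (Pt ok); split=> //; split=> //=; exists 0%N.
have ok : valid_pt (par (pt_v c)) (ht (par (pt_v c))).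
  by rewrite /valid_pt; case: eqP => // /eqP p_nr; rewrite lexx mt_incr.
have par_reach : iter n par (pt_v (Pt ok)) = rt by rewrite /= -iterSr.
have [y [y_anc y_ht]] := IH _ par_reach t_ge t_le.
exists y; split=> //; apply: anc_trans y_anc _.
by split; [exists 1%N | exact: ltW c_lt].
Qed.

End Tree.

Section PathExtension.
Variables (R : realType) (Tf Tg : mtree R) (eps : R).
Hypothesis hroot : mt_ht Tg (mt_root Tg) = mt_ht Tf (mt_root Tf) + eps.

Lemma pext_spec (u : point Tf) (u' : point Tg) x :
  pt_h u' = pt_h u + eps -> anc x u ->
  anc (pext eps u' x) u' /\ pt_h (pext eps u' x) = pt_h x + eps.
Proof.
move=> hu [_ ux].
have shifted_anc : exists y, anc y u' /\ pt_h y = pt_h x + eps.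
  apply: exists_anc_ht; first by rewrite hu lerD2r.
  by rewrite hroot lerD2r le_pt_root.
exact: epsilon_spec _ _ shifted_anc.
Qed.

Lemma pext_anc (u : point Tf) (u' : point Tg) x y :
  pt_h u' = pt_h u + eps -> anc x u -> anc y x ->
  anc (pext eps u' y) (pext eps u' x).
Proof.
move=> hu xu yx; have [x'u' x'_ht] := pext_spec hu xu.
have [y'u' y'_ht] := pext_spec hu (anc_trans yx xu).
by apply: anc_of_le x'u' y'u' _; rewrite x'_ht y'_ht lerD2r; case: yx.
Qed.

Lemma pext_agree_anc (u1 u2 : point Tf) (u1' u2' : point Tg) w x :
  pt_h u1' = pt_h u1 + eps -> pt_h u2' = pt_h u2 + eps ->
  anc w u1 -> anc w u2 -> pext eps u1' w = pext eps u2' w ->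
  anc x w -> pext eps u1' x = pext eps u2' x.
Proof.
move=> hu1 hu2 wu1 wu2 agree_w xw.
have x1_anc : anc (pext eps u1' x) u2'.
  apply: anc_trans (pext_anc hu1 wu1 xw) _.
  by rewrite agree_w; exact: (pext_spec hu2 wu2).1.
have [x2_anc x2_ht] := pext_spec hu2 (anc_trans xw wu2).
apply: anc_ht_inj x1_anc x2_anc _.
by rewrite x2_ht (pext_spec hu1 (anc_trans xw wu1)).2.
Qed.

Lemma pext_near (u1 u2 : point Tf) (u1' u2' : point Tg) x y a d :
  pt_h u1' = pt_h u1 + eps -> pt_h u2' = pt_h u2 + eps ->
  anc x u1 -> anc y u2 -> anc a x -> anc a y ->
  pext eps u1' a = pext eps u2' a ->
  (pt_h a - pt_h x) + (pt_h a - pt_h y) < d ->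
  near (pext eps u1' x) (pext eps u2' y) d.
Proof.
move=> hu1 hu2 xu1 yu2 ax ay agree_a a_near.
exists (pext eps u1' a); split; first exact: pext_anc hu1 xu1 ax.
split; first by rewrite agree_a; exact: pext_anc hu2 yu2 ay.
rewrite (pext_spec hu1 (anc_trans ax xu1)).2 (pext_spec hu1 xu1).2.
rewrite (pext_spec hu2 yu2).2; move: a_near.
by congr (_ < _); ring.
Qed.

Section Union.
Variables (ui uj : point Tf) (ui' uj' : point Tg).
Hypotheses (hui : pt_h ui' = pt_h ui + eps) (huj : pt_h uj' = pt_h uj + eps).
Hypothesis agree : forall x, anc x ui -> anc x uj -> pext eps ui' x = pext eps uj' x.

Let F := punion (fun x => anc x ui) (pext eps ui') (pext eps uj').

Lemma punion_branch x : anc x ui \/ anc x uj ->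
  exists u u', [/\ anc x u, pt_h u' = pt_h u + eps
                 & forall z, anc z u -> F z = pext eps u' z].
Proof.
move=> [xui|xuj]; [exists ui, ui' | exists uj, uj']; split=> // z zu;
  rewrite /F /punion; case: excluded_middle_informative => // zui.
exact: agree.
Qed.

Lemma cont_on_punion_pext : cont_on (fun x => anc x ui \/ anc x uj) F.
Proof.
move=> x Sx e e_gt0; exists e; split=> // y Sy [a [ax [ay a_near]]].
have [u1 [u1' [xu1 hu1 F_u1]]] := punion_branch Sx.
have [u2 [u2' [yu2 hu2 F_u2]]] := punion_branch Sy.
have agree_a : pext eps u1' a = pext eps u2' a.
  by rewrite -F_u1 ?F_u2 //; [exact: anc_trans ay yu2 | exact: anc_trans ax xu1].
by rewrite F_u1 // F_u2 //; exact: pext_near hu1 hu2 xu1 yu2 ax ay agree_a a_near.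
Qed.

End Union.
End PathExtension.

Theorem lemma4p5 (R : realType) (Tf Tg : mtree R) (eps : R)
  (heps : 0 < eps)
  (hroot : mt_ht Tg (mt_root Tg) = mt_ht Tf (mt_root Tf) + eps)
  (phi : point Tf -> point Tg)
  (hphi : forall u, aug_leaf_f Tf Tg eps u ->
            aug_node_g Tf Tg eps (phi u) /\ pt_h (phi u) = pt_h u + eps)
  (ui uj : point Tf)
  (hi : aug_leaf_f Tf Tg eps ui) (hj : aug_leaf_f Tf Tg eps uj) (hij : ui <> uj)
  (v : point Tf) (hv : is_lca v ui uj) :
  ((forall x, anc x ui -> anc x uj -> pext eps (phi ui) x = pext eps (phi uj) x)
     <-> pext eps (phi ui) v = pext eps (phi uj) v)
  /\ (pext eps (phi ui) v = pext eps (phi uj) v ->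
      cont_on (fun x => anc x ui \/ anc x uj)
        (punion (fun x => anc x ui) (pext eps (phi ui)) (pext eps (phi uj)))).
Proof.
have hui := (hphi _ hi).2; have huj := (hphi _ hj).2.
have [vui [vuj v_min]] := hv.
have agree_above_v : pext eps (phi ui) v = pext eps (phi uj) v ->
    forall x, anc x ui -> anc x uj -> pext eps (phi ui) x = pext eps (phi uj) x.
  move=> agree_v x xui xuj.
  have xv : anc x v := anc_of_le vui xui (v_min x xui xuj).
  exact: (pext_agree_anc hroot hui huj vui vuj agree_v xv).
split; first by split=> [agree|]; [exact: agree | exact: agree_above_v].
by move=> agree_v; exact: (cont_on_punion_pext hroot hui huj (agree_above_v agree_v)).
Qed.
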